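(* Let $d\ge 1$, $\delta>0$, $N\ge 1$, let $\varphi_1,\dots,\varphi_N\in\mathbb{S}^{d-1}$ be arbitrary (deterministic) unit vectors, and let $\psi\in\mathbb{S}^{d-1}$. Let $\epsilon_1,\dots,\epsilon_N$ be i.i.d. random variables uniformly distributed on $[-\delta,\delta]$. Define $$P_N=\bigcap_{n=1}^N\{u\in\mathbb{R}^d:\ |\langle u,\varphi_n\rangle-\epsilon_n|\le\delta\},\qquad R_N(\psi)=\sup\{r\ge 0:\ r\psi\in P_N\}\in[0,\infty].$$ Then $$\mathbb{E}|R_N(\psi)|^2\ \ge\ \frac{8\delta^2}{(N+1)(N+2)}.$$
   Context: $P_N$ is the error polytope of consistent reconstruction: if $q_n=\langle x,\varphi_n\rangle+\epsilon_n$ and $\tilde x$ satisfies $|\langle\tilde x,\varphi_n\rangle-q_n|\le\delta$ for all $n$, then $x-\tilde x\in P_N$. $R_N(\psi)$ is the radial size of $P_N$ in the direction $\psi$. *)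

From HB Require Import structures.
From mathcomp Require Import all_boot all_order all_algebra.
From mathcomp Require Import all_classical all_reals all_analysis.
Set Implicit Arguments. Unset Strict Implicit. Unset Printing Implicit Defensive.
Import Order.TTheory GRing.Theory Num.Theory.
Import numFieldNormedType.Exports.
Local Open Scope classical_set_scope.
Local Open Scope ring_scope.

Definition dotv (R : realType) (d : nat) (u v : 'rV[R]_d) : R :=
  \sum_(i < d) u 0 i * v 0 i.

Definition unit_vec (R : realType) (d : nat) (u : 'rV[R]_d) : Prop :=
  dotv u u = 1.

Definition polytope (R : realType) (d N : nat) (phi : 'I_N -> 'rV[R]_d)
  (delta : R) (eps : 'I_N -> R) : set 'rV[R]_d :=
  [set u | forall n : 'I_N, `| dotv u (phi n) - eps n | <= delta].

Definition radial_size (R : realType) (d N : nat) (phi : 'I_N -> 'rV[R]_d)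
  (delta : R) (eps : 'I_N -> R) (psi : 'rV[R]_d) : \bar R :=
  ereal_sup [set r%:E | r in [set r : R | 0 <= r /\ polytope phi delta eps (r *: psi)]].

Definition uniform_on (d0 : measure_display) (T : measurableType d0) (R : realType)
  (P : probability T R) (delta : R) (X : T -> R) : Prop :=
  forall A : set R, measurable A ->
    P (X @^-1` A) = (lebesgue_measure (A `&` [set x : R | (- delta <= x <= delta)%R]) / (2 * delta)%:E)%E.

Definition mutually_independent (d0 : measure_display) (T : measurableType d0)
  (R : realType) (P : probability T R) (N : nat) (X : 'I_N -> T -> R) : Prop :=
  forall A : 'I_N -> set R, (forall n, measurable (A n)) ->
    P (\bigcap_(n in [set: 'I_N]) (X n @^-1` A n)) =
    (\prod_(n < N) P (X n @^-1` A n))%E.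

From HB Require Import structures.
From mathcomp Require Import all_boot all_order all_algebra.
From mathcomp Require Import all_classical all_reals all_analysis.
From mathcomp Require Import ring lra.
Set Implicit Arguments.
Unset Strict Implicit.
Unset Printing Implicit Defensive.
Import Order.TTheory GRing.Theory Num.Theory.
Import numFieldNormedType.Exports.
Local Open Scope classical_set_scope.
Local Open Scope ring_scope.

(** The constraint [|r <psi, phi_n> - eps_n| <= delta] holds for every
    [0 <= r <= delta + s_n eps_n], where [s_n] is the sign of [<psi, phi_n>],
    because [|<psi, phi_n>| <= 1].  Hence the radial size is at least
    [V = min_n (delta + s_n eps_n)], a minimum of [N] independent variables
    uniform on [[0, 2 delta]].  Its tail is
    [P(V^2 > r) = (1 - sqrt r / (2 delta))^N] for [r <= 4 delta^2], and
    integrating the tail gives [E V^2 = 8 delta^2 / ((N+1)(N+2))]. *)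

(* Lets [is_derive_eq] differentiate [f y ^+ n] for an arbitrary expression [f y]. *)
#[local] Instance is_derive_fun_pow (R : realType) (f : R -> R) (n : nat) (x df : R) :
  is_derive x 1 f df -> is_derive x 1 (fun y => f y ^+ n) (n%:R * f x ^+ n.-1 * df).
Proof. by move/(is_deriveX n); rewrite exprfctE. Qed.

Section one_sub_sqrt_pow_integral.
Variables (R : realType) (a : R) (N : nat).
Hypothesis a_gt0 : 0 < a.

Let a_neq0 : a != 0. Proof. exact: lt0r_neq0. Qed.

Definition one_sub_pow_primitive (u : R) : R :=
  - (2 * a ^+ 2) * ((1 - u / a) ^+ N.+1 / N.+1%:R - (1 - u / a) ^+ N.+2 / N.+2%:R).

Lemma is_derive_one_sub_pow_primitive (u : R) :
  is_derive u 1 one_sub_pow_primitive (2 * u * (1 - u / a) ^+ N).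
Proof.
rewrite /one_sub_pow_primitive; apply: is_derive_eq; rewrite !scaler0 !add0r !mul1r /=.
rewrite [(1 - u / a) ^+ N.+1]exprS /GRing.scale /= !mulr1.
field; rewrite a_neq0 /= !gt_eqF //; have := ler0n R N; lra.
Qed.

Lemma integral_one_sub_sqrt_pow :
  (\int[lebesgue_measure]_(x in `[0%R, (a ^+ 2)%R]) ((1 - Num.sqrt x / a) ^+ N)%R%:E =
    (2 * a ^+ 2 / (N.+1%:R * N.+2%:R))%R%:E)%E.
Proof.
have dF u := is_derive_one_sub_pow_primitive u.
have cF u : {for u, continuous one_sub_pow_primitive}.
  apply: differentiable_continuous; apply/derivable1_diffP.
  exact: (@ex_derive _ _ _ _ _ _ _ (dF u)).
have cf u : {for u, continuous (fun u : R => (1 - u / a) ^+ N)}.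
  apply: differentiable_continuous; apply/derivable1_diffP.
  have [df hdf] : exists df, is_derive u 1 (fun u : R => (1 - u / a) ^+ N) df.
    by eexists; apply: is_derive_eq.
  exact: (@ex_derive _ _ _ _ _ _ _ hdf).
rewrite (continuous_FTC2 (F := one_sub_pow_primitive \o Num.sqrt)).
- rewrite -EFinB /= sqrtr0 sqrtr_sqr ger0_norm ?(ltW a_gt0) //.
  rewrite /one_sub_pow_primitive divff // subrr !expr0n /= !mul0r !subr0 !expr1n.
  congr EFin; field; rewrite !gt_eqF //; have := ler0n R N; lra.
- by rewrite exprn_gt0.
- by apply: continuous_subspaceT => x; exact: continuous_comp (@sqrt_continuous R x) (cf _).
- split.
  + move=> x /[!in_itv] /= /andP[x_gt0 _].
    exact: (@ex_derive _ _ _ _ _ _ _ (is_derive1_comp (dF _) (is_derive1_sqrt x_gt0))).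
  + by apply: cvg_at_right_filter; exact: continuous_comp (@sqrt_continuous R _) (cF _).
  + by apply: cvg_at_left_filter; exact: continuous_comp (@sqrt_continuous R _) (cF _).
- move=> x /[!in_itv] /= /andP[x_gt0 _]; rewrite derive1E.
  rewrite (@derive_val _ _ _ _ _ _ _ (is_derive1_comp (dF _) (is_derive1_sqrt x_gt0))) /=.
  by rewrite mulrAC divff ?mul1r // mulf_neq0 // gt_eqF // sqrtr_gt0.
Qed.

(* The tail [P(V^2 > r)] of the minimum [V] of [N] independent uniform variables on [[0, a]]. *)
Definition tail_profile (r : R) : R :=
  if r <= a ^+ 2 then (1 - Num.sqrt r / a) ^+ N else 0.

Lemma integral_tail_profile :
  (\int[lebesgue_measure]_(x in `[0%R, +oo[) (tail_profile x)%:E =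
    (2 * a ^+ 2 / (N.+1%:R * N.+2%:R))%R%:E)%E.
Proof.
rewrite -integral_one_sub_sqrt_pow integral_mkcond [RHS]integral_mkcond.
apply: eq_integral => r _; rewrite !patchE /tail_profile !mem_setE !in_itv /= andbT.
by case: (0 <= r); case: (r <= a ^+ 2).
Qed.

End one_sub_sqrt_pow_integral.

Lemma measurable_bigmin (R : realType) d (T : measurableType d) (I : Type)
    (s : seq I) (x : R) (F : I -> T -> R) : (forall i, measurable_fun setT (F i)) ->
  measurable_fun setT (fun w => \big[Order.min/x]_(i <- s) F i w).
Proof.
move=> mF; elim: s => [|i s IH].
  by under eq_fun do rewrite big_nil; exact: measurable_cst.
by under eq_fun do rewrite big_cons; exact: measurable_realfun.measurable_minr.
Qed.

Definition sign_of {R : numDomainType} (b : bool) : R := if b then 1 else -1.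

Definition slack (R : realType) (b : bool) (delta x : R) : R :=
  (delta + sign_of b * x) * \1_(`[- delta, delta]) x.

Section slack.
Variables (R : realType) (delta : R).

Lemma measurable_slack b : measurable_fun setT (slack b delta).
Proof.
apply: measurable_realfun.measurable_funM; last exact: measurable_realfun.measurable_indic.
apply: measurable_realfun.continuous_measurable_fun => x.
apply: continuousD; first exact: cst_continuous.
by apply: continuousM; [exact: cst_continuous | exact: cvg_id].
Qed.

Lemma slack_in b x : `|x| <= delta -> slack b delta x = delta + sign_of b * x.
Proof. by move=> hx; rewrite /slack indicE mem_set ?mulr1 //= in_itv /= -ler_norml. Qed.

Lemma slack_out b x : delta < `|x| -> slack b delta x = 0.
Proof.
move=> hx; rewrite /slack indicE memNset ?mulr0 //= in_itv /= -ler_norml.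
by apply/negP; rewrite -ltNge.
Qed.

Lemma slack_ge0 b x : 0 <= delta -> 0 <= slack b delta x.
Proof.
move=> delta_ge0; have [hx|hx] := lerP `|x| delta; last by rewrite slack_out.
by rewrite slack_in //; move: hx; rewrite ler_norml /sign_of => /andP[? ?]; case: b; lra.
Qed.

Lemma lebesgue_slack_gt b t : 0 < delta -> 0 <= t < 2 * delta ->
  lebesgue_measure (slack b delta @^-1` `]t, +oo[ `&` [set x | - delta <= x <= delta]) =
  (2 * delta - t)%:E.
Proof.
move=> delta_gt0 /andP[t_ge0 t_lt].
have -> : slack b delta @^-1` `]t, +oo[ `&` [set x | - delta <= x <= delta] =
    [set` if b then `]t - delta, delta] else `[- delta, delta - t[].
  apply/seteqP; split => x /=.
  - rewrite in_itv /= andbT => -[tx /andP[x1 x2]].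
    rewrite slack_in ?ler_norml ?x1 ?x2 // /sign_of in tx.
    by case: b tx => /= tx; rewrite in_itv /=; apply/andP; split; lra.
  - case: b; rewrite /= in_itv /= => /andP[x1 x2];
      (have hx : `|x| <= delta by rewrite ler_norml; apply/andP; split; lra);
      rewrite in_itv /= andbT slack_in // /sign_of;
      (split; [lra | apply/andP; split; lra]).
by case: b; rewrite lebesgue_measure_itv /= lte_fin ifT -?EFinB; first [congr EFin; lra | lra].
Qed.

Definition min_slack (N : nat) (b : 'I_N -> bool) (e : 'I_N -> R) : R :=
  \big[Order.min/(2 * delta)]_(n < N) slack (b n) delta (e n).

Variables (N : nat) (b : 'I_N -> bool).

Lemma min_slack_gt e t : t < 2 * delta ->
  (t < min_slack b e) = [forall n, t < slack (b n) delta (e n)].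
Proof.
move=> t_lt; apply/idP/forallP => [t_lt_min n|t_lt_slack]; last exact: lt_bigmin.
exact: lt_le_trans t_lt_min (bigmin_le _ _ _).
Qed.

Lemma min_slack_ge0 e : 0 <= delta -> 0 <= min_slack b e.
Proof. by move=> delta_ge0; apply: le_bigmin => [|n _]; [lra | exact: slack_ge0]. Qed.

Lemma min_slack_le e : min_slack b e <= 2 * delta.
Proof. exact: bigmin_le_id. Qed.

Lemma min_slack_le_slack e n : min_slack b e <= slack (b n) delta (e n).
Proof. exact: bigmin_le. Qed.

Lemma sqr_min_slack_gt e r : 0 < delta -> 0 <= r < (2 * delta) ^+ 2 ->
  (r < min_slack b e * min_slack b e) =
  [forall n, Num.sqrt r < slack (b n) delta (e n)].
Proof.
move=> delta_gt0 /andP[r_ge0 r_lt]; have V_ge0 := min_slack_ge0 e (ltW delta_gt0).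
have sqrt_r_ge0 := sqrtr_ge0 r.
rewrite -min_slack_gt; last by rewrite -(ltr_pXn2r (n := 2)) ?nnegrE ?sqr_sqrtr // mulr_ge0 // ltW.
by rewrite -(ltr_pXn2r (n := 2) _ sqrt_r_ge0 V_ge0) // sqr_sqrtr // expr2.
Qed.

Lemma measurable_min_slack d (T : measurableType d) (eps : 'I_N -> T -> R) :
  (forall n, measurable_fun setT (eps n)) ->
  measurable_fun setT (fun w => min_slack b (fun n => eps n w)).
Proof.
move=> meps; apply: measurable_bigmin => n.
exact: measurableT_comp (measurable_slack (b n)) (meps n).
Qed.

End slack.

Lemma dotvZ (R : realType) d (r : R) (u v : 'rV[R]_d) : dotv (r *: u) v = r * dotv u v.
Proof. by rewrite /dotv mulr_sumr; apply: eq_bigr => i _; rewrite mxE mulrA. Qed.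

Lemma unit_vec_dotv_le1 (R : realType) d (u v : 'rV[R]_d) :
  unit_vec u -> unit_vec v -> `|dotv u v| <= 1.
Proof.
rewrite /unit_vec => uu1 vv1.
have sumB : \sum_(i < d) (u 0 i - v 0 i) ^+ 2 = dotv u u + dotv v v - 2 * dotv u v.
  by rewrite /dotv mulr_sumr -big_split -sumrB /=; apply: eq_bigr => i _; ring.
have sumD : \sum_(i < d) (u 0 i + v 0 i) ^+ 2 = dotv u u + dotv v v + 2 * dotv u v.
  by rewrite /dotv mulr_sumr -!big_split /=; apply: eq_bigr => i _; ring.
have : 0 <= \sum_(i < d) (u 0 i - v 0 i) ^+ 2 by apply: sumr_ge0 => i _; exact: sqr_ge0.
have : 0 <= \sum_(i < d) (u 0 i + v 0 i) ^+ 2 by apply: sumr_ge0 => i _; exact: sqr_ge0.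
by rewrite sumB sumD uu1 vv1 ler_norml => ? ?; apply/andP; split; lra.
Qed.

Definition dotv_signs (R : realType) d N (phi : 'I_N -> 'rV[R]_d) (psi : 'rV[R]_d)
    (n : 'I_N) : bool :=
  0 <= dotv psi (phi n).

Section radial_size_lower_bound.
Variables (R : realType) (d N : nat) (phi : 'I_N -> 'rV[R]_d) (psi : 'rV[R]_d).
Variables (delta : R) (e : 'I_N -> R).
Hypotheses (phi_unit : forall n, unit_vec (phi n)) (psi_unit : unit_vec psi).

Let V := min_slack delta (dotv_signs phi psi) e.

Lemma min_slack_in_polytope : (forall n, `|e n| <= delta) -> polytope phi delta e (V *: psi).
Proof.
move=> e_le n; rewrite dotvZ.
have V_le : V <= delta + sign_of (dotv_signs phi psi n) * e n.
  by rewrite -slack_in //; exact: min_slack_le_slack.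
have := unit_vec_dotv_le1 psi_unit (phi_unit n); rewrite !ler_norml => /andP[? ?].
have := e_le n; rewrite ler_norml => /andP[? ?].
have V_ge0 : 0 <= V by apply: min_slack_ge0; lra.
move: V_le; rewrite /sign_of /dotv_signs.
by case: (lerP 0 (dotv psi (phi n))) => s_sign V_le; apply/andP; split; nra.
Qed.

Lemma sqr_min_slack_le_radial_size : 0 < delta ->
  ((V * V)%:E <= radial_size phi delta e psi * radial_size phi delta e psi)%E.
Proof.
move=> delta_gt0; have V_ge0 : 0 <= V by apply: min_slack_ge0; lra.
have [[n e_gt]|e_le] := pselect (exists n, delta < `|e n|).
  have -> : V = 0.
    apply/eqP; rewrite eq_le V_ge0 andbT.
    by have := min_slack_le_slack delta (dotv_signs phi psi) e n; rewrite slack_out.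
  rewrite mulr0; case: (radial_size _ _ _ _) => [r||] /=.
  - by rewrite -EFinM lee_fin -expr2 sqr_ge0.
  - by rewrite mulyy leey.
  - by rewrite mulNyNy leey.
have V_le : (V%:E <= radial_size phi delta e psi)%E.
  apply: ereal_sup_ubound; exists V => //; split => //.
  by apply: min_slack_in_polytope => n; rewrite leNgt; apply/negP => ?; apply: e_le; exists n.
by rewrite EFinM; apply: lee_pmul.
Qed.

End radial_size_lower_bound.

Section min_slack_tail.
Variables (R : realType) (d0 : measure_display) (T : measurableType d0).
Variables (P : probability T R) (N : nat) (delta : R) (b : 'I_N -> bool).
Variable eps : 'I_N -> T -> R.
Hypotheses (delta_gt0 : 0 < delta) (N_gt0 : (0 < N)%N).
Hypothesis eps_uniform : forall n, uniform_on P delta (eps n).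
Hypothesis eps_indep : mutually_independent P eps.

Let V w := min_slack delta b (fun n => eps n w).

Lemma probability_sqr_min_slack_gt r : 0 <= r ->
  P ((fun w => V w * V w) @^-1` `]r, +oo[) = (tail_profile (2 * delta) N r)%:E.
Proof.
move=> r_ge0; have two_delta_gt0 : 0 < 2 * delta by rewrite mulr_gt0.
have V_ge0 w : 0 <= V w by apply: min_slack_ge0; lra.
have [r_lt|r_ge] := ltrP r ((2 * delta) ^+ 2); last first.
  have -> : (fun w => V w * V w) @^-1` `]r, +oo[ = set0.
    apply/seteqP; split => w //=; rewrite in_itv /= andbT => VV_gt.
    have : V w * V w <= (2 * delta) ^+ 2.
      by rewrite -expr2 ler_pXn2r ?nnegrE ?min_slack_le //; lra.
    lra.
  rewrite measure0 /tail_profile; case: ifPn => // r_le.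
  have -> : r = (2 * delta) ^+ 2 by apply/eqP; rewrite eq_le r_le r_ge.
  by rewrite sqrtr_sqr ger0_norm ?divff ?subrr ?expr0n -?lt0n ?gt_eqF //; lra.
pose t := Num.sqrt r.
have t_in : 0 <= t < 2 * delta.
  by rewrite sqrtr_ge0 -(ltr_pXn2r (n := 2)) ?nnegrE ?sqr_sqrtr ?sqrtr_ge0 //; lra.
pose A n := slack (b n) delta @^-1` `]t, +oo[.
have mA n : measurable (A n).
  by rewrite /A -[X in measurable X]setTI; exact: measurable_slack measurableT _ (measurable_itv _).
have -> : (fun w => V w * V w) @^-1` `]r, +oo[ = \bigcap_(n in [set: 'I_N]) (eps n @^-1` A n).
  apply/seteqP; split => w /=; rewrite in_itv /= andbT.
    by rewrite sqr_min_slack_gt ?r_ge0 // => /forallP VV_gt n _; rewrite /A /= in_itv /= andbT.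
  move=> in_A; rewrite sqr_min_slack_gt ?r_ge0 //; apply/forallP => n.
  by have := in_A n I; rewrite /A /= in_itv /= andbT.
have PA n : P (eps n @^-1` A n) = ((2 * delta - t) / (2 * delta))%:E.
  by rewrite eps_uniform // lebesgue_slack_gt // EFinM inver gt_eqF //; lra.
rewrite eps_indep //; under eq_bigr do rewrite PA.
rewrite prodEFin big_const_ord iter_mulr_1 /tail_profile ltW //.
by rewrite mulrBl divff ?gt_eqF.
Qed.

End min_slack_tail.

(* No measurability is needed: [ge0_integralTE] is a supremum over simple minorants. *)
Lemma ge0_le_integralT d (T : measurableType d) (R : realType)
    (mu : {measure set T -> \bar R}) (f g : T -> \bar R) :
  (forall x, 0 <= f x)%E -> (forall x, f x <= g x)%E -> (\int[mu]_x f x <= \int[mu]_x g x)%E.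
Proof.
move=> f_ge0 f_le_g; have g_ge0 x := le_trans (f_ge0 x) (f_le_g x).
rewrite !ge0_integralTE //; apply: le_ereal_sup => _ [h h_le_f <-].
by exists h => //= x; exact: le_trans (h_le_f x) (f_le_g x).
Qed.

Theorem proposition3p1 (R : realType) (d0 : measure_display) (T : measurableType d0)
  (P : probability T R) (d N : nat) (delta : R)
  (phi : 'I_N -> 'rV[R]_d) (psi : 'rV[R]_d) (eps : 'I_N -> T -> R) :
  (1 <= d)%N -> 0 < delta -> (1 <= N)%N ->
  (forall n, unit_vec (phi n)) -> unit_vec psi ->
  (forall n, measurable_fun setT (eps n)) ->
  (forall n, uniform_on P delta (eps n)) ->
  mutually_independent P eps ->
  ((8 * delta ^+ 2 / ((N%:R + 1) * (N%:R + 2)))%:E <=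
   \int[P]_w (radial_size phi delta (fun n => eps n w) psi *
              radial_size phi delta (fun n => eps n w) psi))%E.
Proof.
move=> _ delta_gt0 N_gt0 phi_unit psi_unit meps eps_uniform eps_indep.
pose V w := min_slack delta (dotv_signs phi psi) (fun n => eps n w).
have mVV : measurable_fun setT (fun w => V w * V w).
  by apply: measurable_realfun.measurable_funM; exact: measurable_min_slack.
pose X : {RV P >-> R} := mfun_Sub (mem_set mVV : _ \in mfun).
have X_ge0 w : 0 <= X w by apply: mulr_ge0; apply: min_slack_ge0; lra.
apply: (le_trans _ (@ge0_le_integralT _ T R P (fun w => (X w)%:E) _ _ _)); last 2 first.
- by move=> w; rewrite lee_fin.
- by move=> w; exact: sqr_min_slack_le_radial_size.
rewrite -expectation_def ge0_expectation_ccdf //.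
have -> : (\int[lebesgue_measure]_(r in `[0%R, +oo[) ccdf X r =
    \int[lebesgue_measure]_(r in `[0%R, +oo[) (tail_profile (2 * delta) N r)%:E)%E.
  apply: eq_integral => r; rewrite inE /= in_itv /= andbT => r_ge0.
  exact: probability_sqr_min_slack_gt.
rewrite integral_tail_profile ?lee_fin; last lra.
suff -> : 8 * delta ^+ 2 / ((N%:R + 1) * (N%:R + 2)) =
    2 * (2 * delta) ^+ 2 / (N.+1%:R * N.+2%:R) by [].
rewrite -!natr1; field; rewrite !gt_eqF //; have := ler0n R N; lra.
Qed.
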